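(* Suppose all issues are binary and there is a single order $\mathcal O$ of the issues such that every agent's preference ranking is $\mathcal O$-legal. Then local dominance improvement dynamics converge: from any initial vote profile, every sequence of LDI steps is finite. This holds for any scheduler and for any nonnegative uncertainty parameters of the agents, which may vary between rounds.
   Context: Issues $\mathcal P=\{1,\dots,p\}$ with candidate sets $D_i$; binary means $D_i=\{0,1\}$ for all $i$. There are $n$ agents with strict rankings $\succ_j$ over $\mathcal D=\prod_iD_i$, and vote profiles $a\in\mathcal D^n$. Score tuples and outcomes: - For a score tuple $v$ (vectors $v^i\in\mathbb N^{D_i}$), the plurality outcome $f(v)$ picks on each issue the top-scoring candidate, with ties broken lexicographically. - $v+b$ adds one vote for $b^i$ on each issue $i$. - $s_{-j}(a)$ is the score tuple of $a$ without agent $j$. Uncertainty: per issue, a candidate-wise distance $\delta(s,\tilde s)=\max_c\hat\delta(s(c),\tilde s(c))$ with $\hat\delta$ monotone (e.g. $\ell_\infty$). With parameters $r_j$, $$\tilde S_{-j}(a;r_j)=\prod_i\{v^i:\delta(v^i,s^i_{-j}(a))\le r^i_j\}.$$ Local dominance: $\hat a_j$ $S$-beats $a_j$ if some $v\in S$ has $f(v+\hat a_j)\succ_j f(v+a_j)$. It $S$-dominates $a_j$ if it $S$-beats $a_j$ and $a_j$ does not $S$-beat it. An LDI step of agent $j$ on issue $i$ at $a$ (with $S=\tilde S_{-j}(a;r_j)$, $r_j$ being $j$'s current parameters) is a change to a vote that $S$-dominates $a_j$, differs from $a_j$ only on issue $i$, and is not $S$-dominated by another vote differing from $a_j$ only on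 issue $i$. Dynamics: at each round a scheduler picks an agent and an issue on which that agent has an LDI step, and the agent makes that step. $\mathcal O$-legality: for an order $\mathcal O=(o_1,\dots,o_p)$ of the issues, a ranking is $\mathcal O$-legal if, for each $i$, its relative ordering of the candidates of issue $o_i$ (holding all other issues fixed) depends only on the values of issues $o_1,\dots,o_{i-1}$, and not on the values of $o_{i+1},\dots,o_p$. *)

From mathcomp Require Import all_boot all_order all_algebra all_fingroup.
Set Implicit Arguments. Unset Strict Implicit. Unset Printing Implicit Defensive.
Import Order.TTheory GRing.Theory Num.Theory.
Local Open Scope ring_scope.

Section Voting.
Variables (p n : nat).

(* Binary issues: D_i = {0,1} = bool (false = 0, true = 1). *)
Definition outcome := {ffun 'I_p -> bool}.
Definition profile := 'I_n -> outcome.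
Definition scores := 'I_p -> bool -> nat.

Definition strict_ranking (pr : rel outcome) : Prop :=
  [/\ irreflexive pr, transitive pr &
      forall x y : outcome, x != y -> pr x y || pr y x].

(* Plurality outcome; on each issue the top-scoring candidate, ties broken
   lexicographically, i.e. in favour of candidate 0 = false. *)
Definition plurality (v : scores) : outcome :=
  [ffun i => (v i false < v i true)%N].

Definition add_vote (v : scores) (b : outcome) : scores :=
  fun i c => (v i c + (b i == c))%N.

Definition scores_wo (a : profile) (j : 'I_n) : scores :=
  fun i c => #|[pred k : 'I_n | (k != j) && (a k i == c)]|.

Definition dist {R : realDomainType} (dhat : nat -> nat -> R)
  (s s' : bool -> nat) : R :=
  Num.max (dhat (s false) (s' false)) (dhat (s true) (s' true)).

Definition monotone_dhat {R : realDomainType} (dhat : nat -> nat -> R) : Prop :=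
  (forall x, dhat x x = 0) /\
  (forall x y z : nat, (x <= y <= z)%N ->
     [/\ dhat x y <= dhat x z, dhat y x <= dhat z x,
         dhat z y <= dhat z x & dhat y z <= dhat x z]).

Definition unc_set {R : realDomainType} (dhat : nat -> nat -> R)
  (a : profile) (j : 'I_n) (rj : 'I_p -> R) (v : scores) : Prop :=
  forall i, dist dhat (v i) (scores_wo a j i) <= rj i.

Definition beats (pr : rel outcome) (S : scores -> Prop) (b' b : outcome) : Prop :=
  exists v, S v /\ pr (plurality (add_vote v b')) (plurality (add_vote v b)).

Definition dominates (pr : rel outcome) (S : scores -> Prop) (b' b : outcome) : Prop :=
  beats pr S b' b /\ ~ beats pr S b b'.

Definition differs_only_on (i : 'I_p) (b b' : outcome) : Prop :=
  forall i', i' != i -> b' i' = b i'.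

Definition LDI_move {R : realDomainType} (dhat : nat -> nat -> R)
  (pref : 'I_n -> rel outcome) (a : profile) (j : 'I_n) (i : 'I_p)
  (rj : 'I_p -> R) (b : outcome) : Prop :=
  let S := unc_set dhat a j rj in
  [/\ dominates (pref j) S b (a j),
      differs_only_on i (a j) b &
      forall b', differs_only_on i (a j) b' -> b' != b ->
        ~ dominates (pref j) S b' b].

Definition LDI_step {R : realDomainType} (dhat : nat -> nat -> R)
  (pref : 'I_n -> rel outcome) (a : profile) (j : 'I_n) (i : 'I_p)
  (rj : 'I_p -> R) (a' : profile) : Prop :=
  (forall k, k != j -> a' k = a k) /\ LDI_move dhat pref a j i rj (a' j).

Definition upd (d : outcome) (i : 'I_p) (c : bool) : outcome :=
  [ffun i' => if i' == i then c else d i'].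

(* O-legality, O = (o 0, ..., o (p-1)) given as a permutation of the issues:
   the relative ordering of the candidates of issue o k (other issues fixed)
   depends only on the values of issues o k', k' < k. *)
Definition O_legal (o : {perm 'I_p}) (pr : rel outcome) : Prop :=
  forall k : 'I_p, forall d d' : outcome,
    (forall k' : 'I_p, (k' < k)%N -> d (o k') = d' (o k')) ->
    forall c c' : bool,
      pr (upd d (o k) c) (upd d (o k) c') = pr (upd d' (o k) c) (upd d' (o k) c').

End Voting.

(* An LDI step of agent j on issue i flips j's vote on i, and j must strictly prefer
   the current outcome with issue i set to the new vote over the same outcome with it
   set to the old vote: otherwise, splicing the dominance witness on issue i with the
   true votes of the others elsewhere would let the old vote beat the new one.  By
   O-legality that preference depends only on the winners of the issues before i in
   O, which depend only on the votes on those issues.  Induct along O: once no step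
   touches o_1, ..., o_(k-1) any more, every agent has a fixed target value on o_k and
   each step on o_k brings a voter to its target for good, so the number of voters
   off target drops and steps on o_k stop as well.  After all p issues, no step is
   possible, contradicting an infinite run. *)
From mathcomp Require Import all_boot all_order all_algebra all_fingroup.
From mathcomp Require Import zify.
From Stdlib Require Import Classical.
Set Implicit Arguments. Unset Strict Implicit. Unset Printing Implicit Defensive.
Import Order.TTheory GRing.Theory Num.Theory.

Lemma strict_ranking_asym p (pr : rel (outcome p)) (x y : outcome p) :
  strict_ranking pr -> pr x y -> ~~ pr y x.
Proof. by move=> [irr tr _] xy; apply/negP => /(tr _ _ _ xy); rewrite irr. Qed.

(* A vote on a binary issue that changes the winner makes its own candidate win. *)
Lemma pivotal_vote_wins (x y : nat) (e : bool) :
  (x + (e == false) < y + (e == true)) !=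
  (x + (~~ e == false) < y + (~~ e == true)) ->
  (x + (e == false) < y + (e == true)) = e.
Proof. case: e => /=; rewrite ?addn0 ?addn1; do 2 case: ltnP => //; lia. Qed.

Lemma eventually_never (f : nat -> nat) (P : nat -> bool) (T : nat) :
  (forall t, T <= t -> f t.+1 + P t <= f t) ->
  exists T', forall t, T' <= t -> ~~ P t.
Proof.
move=> dec.
have mono t0 d : T <= t0 -> f (t0 + d) <= f t0.
  move=> ht0; elim: d => [|d IH]; first by rewrite addn0.
  by apply: leq_trans _ IH; rewrite addnS; have := dec (t0 + d); lia.
suff: forall m t0, T <= t0 -> f t0 <= m ->
  exists T', forall t, T' <= t -> ~~ P t by apply; [exact: leqnn|].
elim=> [|m IH] t0 ht0 hf.
- exists t0 => t ht; apply/negP => Pt.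
  have := dec t (leq_trans ht0 ht); have := mono t0 (t - t0) ht0.
  by rewrite subnKC // Pt; lia.
- have [[t [ht Pt]]|never] := classic (exists t, t0 <= t /\ P t).
  + apply: (IH t.+1); first lia.
    have := dec t (leq_trans ht0 ht); have := mono t0 (t - t0) ht0.
    by rewrite subnKC // Pt; lia.
  + by exists t0 => t ht; apply/negP => Pt; apply: never; exists t.
Qed.

Definition tally p n (a : profile p n) : scores p :=
  fun i c => #|[pred k | a k i == c]|.

Definition splice p (v s : scores p) (i : 'I_p) : scores p :=
  fun i' => if i' == i then v i' else s i'.

Lemma add_vote_scores_wo p n (a : profile p n) j i c :
  add_vote (scores_wo a j) (a j) i c = tally a i c.
Proof.
rewrite /add_vote /scores_wo /tally addnC [in RHS](cardD1 j) inE.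
by congr (_ + _); apply: eq_card => k; rewrite !inE andbC.
Qed.

Lemma plurality_tally_eq p n (a a' : profile p n) i :
  (forall k, a k i = a' k i) -> plurality (tally a) i = plurality (tally a') i.
Proof.
move=> eq_i; rewrite !ffunE /tally.
by congr (_ < _); apply: eq_card => k; rewrite !inE eq_i.
Qed.

Section LDIMove.
Variables (R : realDomainType) (p n : nat) (dhat : nat -> nat -> R).
Variables (pref : 'I_n -> rel (outcome p)) (a : profile p n) (j : 'I_n).
Variables (i : 'I_p) (rj : 'I_p -> R) (b : outcome p).
Hypotheses (strict_j : strict_ranking (pref j)) (dhat_mono : monotone_dhat dhat).
Hypothesis rj_ge0 : forall i, (0 <= rj i)%R.
Hypothesis move : LDI_move dhat pref a j i rj b.

Let S := unc_set dhat a j rj.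

(* Off issue [i] the splice carries the others' true scores: it stays in the
   uncertainty set (distance 0 there) and reproduces the current winners there. *)
Lemma plurality_splice (v : scores p) (c : outcome p) :
  differs_only_on i (a j) c ->
  plurality (add_vote (splice v (scores_wo a j) i) c) =
  upd (plurality (tally a)) i (plurality (add_vote v c) i).
Proof.
move=> c_off; apply/ffunP => i'; rewrite /upd !ffunE.
have [->|ne] := eqVneq i' i; first by rewrite /add_vote /splice eqxx.
by rewrite -!(add_vote_scores_wo a j) /add_vote /splice (negPf ne) c_off.
Qed.

Lemma unc_set_splice (v : scores p) : S v -> S (splice v (scores_wo a j) i).
Proof.
case: dhat_mono => dhat0 _ Sv i'; rewrite /splice.
by have [->|_] := eqVneq i' i; [exact: Sv | rewrite /dist !dhat0 maxxx].
Qed.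

Lemma LDI_move_flips : b i = ~~ a j i.
Proof.
case: strict_j move => irr _ _ [[[v [_ pref_v]] _] b_off _].
suff: b i != a j i by case: (b i); case: (a j i).
apply/negP => /eqP bi; suff eb : b = a j by move: pref_v; rewrite eb irr.
by apply/ffunP => i'; have [->|/b_off] := eqVneq i' i.
Qed.

Lemma LDI_move_pivotal :
  exists2 v, S v & plurality (add_vote v b) i = b i /\
                   plurality (add_vote v (a j)) i = ~~ b i.
Proof.
case: strict_j move => irr _ _ [[[v [Sv pref_v]] _] b_off _].
have neq_i : plurality (add_vote v b) i != plurality (add_vote v (a j)) i.
  apply/negP => /eqP eq_i.
  suff eq : plurality (add_vote v b) = plurality (add_vote v (a j)).
    by move: pref_v; rewrite eq irr.
  by apply/ffunP => i'; have [->//|ne] := eqVneq i' i; rewrite !ffunE /add_vote b_off.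
have win_b : plurality (add_vote v b) i = b i.
  have flip : a j i = ~~ b i by rewrite LDI_move_flips negbK.
  by move: neq_i; rewrite !ffunE /add_vote flip; apply: pivotal_vote_wins.
exists v => //; split => //.
by move: neq_i; rewrite win_b; case: (b i); case: (plurality _ _).
Qed.

Lemma LDI_move_prefers :
  pref j (upd (plurality (tally a)) i (b i)) (upd (plurality (tally a)) i (~~ b i)).
Proof.
case: strict_j move => _ _ total [[_ no_beat] b_off _].
have [v Sv [win_b win_a]] := LDI_move_pivotal.
set W := plurality (tally a); set v' := splice v (scores_wo a j) i.
have Sv' : S v' := unc_set_splice Sv.
have out_b : plurality (add_vote v' b) = upd W i (b i).
  by rewrite plurality_splice // win_b.
have out_a : plurality (add_vote v' (a j)) = upd W i (~~ b i).
  by rewrite plurality_splice // win_a.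
have neq : upd W i (b i) != upd W i (~~ b i).
  by apply/negP => /eqP/ffunP/(_ i); rewrite !ffunE eqxx; case: (b i).
have [//|beat] := orP (total _ _ neq).
by case: no_beat; exists v'; rewrite out_a out_b.
Qed.

End LDIMove.

Section Dynamics.
Variables (R : realDomainType) (p n : nat) (pref : 'I_n -> rel (outcome p)).
Variables (o : {perm 'I_p}) (dhat : nat -> nat -> R).
Hypotheses (strict : forall j, strict_ranking (pref j)) (legal : forall j, O_legal o (pref j)).
Hypothesis dhat_mono : monotone_dhat dhat.
Variables (a : nat -> profile p n) (ag : nat -> 'I_n) (iss : nat -> 'I_p).
Variable r : nat -> 'I_n -> 'I_p -> R.
Hypothesis r_ge0 : forall t j i, (0 <= r t j i)%R.
Hypothesis step : forall t, LDI_step dhat pref (a t) (ag t) (iss t) (r t (ag t)) (a t.+1).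

Local Notation rank i := (nat_of_ord ((o^-1)%g i)).

Lemma vote_other_issue t j i : i != iss t -> a t.+1 j i = a t j i.
Proof.
case: (step t) => others [_ off _] ne.
by have [->|nj] := eqVneq j (ag t); [exact: off | by rewrite others].
Qed.

Section Stage.
Variables (k : 'I_p) (T : nat).
Hypothesis late_moves : forall t, T <= t -> k <= rank (iss t).

Lemma vote_earlier_issue t (k' : 'I_p) j :
  T <= t -> k' < k -> a t j (o k') = a T j (o k').
Proof.
move=> /subnKC <- lt_k; elim: (t - T) => [|d IH]; first by rewrite addn0.
rewrite addnS vote_other_issue //; apply: contraTneq lt_k => eq_o.
by rewrite -leqNgt; have := late_moves (leq_addr d T); rewrite -eq_o permK.
Qed.

(* O-legality makes this the value on issue [o k] that agent [j] steps to at any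
   later time, since the winners of the earlier issues no longer change. *)
Definition target j :=
  pref j (upd (plurality (tally (a T))) (o k) true) (upd (plurality (tally (a T))) (o k) false).

Lemma move_to_target t : T <= t -> iss t = o k ->
  a t.+1 (ag t) (o k) = target (ag t) /\ a t (ag t) (o k) != target (ag t).
Proof.
move=> le_Tt iss_t; case: (step t) => _; rewrite iss_t => mv.
have flip := LDI_move_flips (strict _) mv.
have prefers := LDI_move_prefers (strict _) dhat_mono (r_ge0 t (ag t)) mv.
move: (a t.+1 (ag t) (o k)) flip prefers => c flip prefers.
have same_before (k' : 'I_p) : k' < k ->
    plurality (tally (a t)) (o k') = plurality (tally (a T)) (o k').
  by move=> lt_k; apply: plurality_tally_eq => j; apply: vote_earlier_issue.
rewrite (legal _ same_before) in prefers.
suff <- : c = target (ag t) by rewrite flip; split; last by case: (a t _ _).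
rewrite /target; case: c prefers {flip} => // pref_ft.
by apply/esym/negbTE; exact: strict_ranking_asym (strict _) pref_ft.
Qed.

Definition off_target t := [set j | a t j (o k) != target j].

Lemma off_target_decreases t :
  T <= t -> #|off_target t.+1| + (iss t == o k) <= #|off_target t|.
Proof.
move=> le_Tt; have [iss_t|ne] := eqVneq (iss t) (o k); last first.
  rewrite addn0; apply: subset_leq_card; apply/subsetP => j.
  by rewrite !inE vote_other_issue // eq_sym.
have [moved was_off] := move_to_target le_Tt iss_t.
rewrite addn1; apply: proper_card; apply/properP; split.
  apply/subsetP => j; rewrite !inE; have [->|nj] := eqVneq j (ag t).
    by rewrite moved eqxx.
  by case: (step t) => others _; rewrite others.
by exists (ag t); rewrite !inE ?moved ?eqxx.
Qed.

Lemma eventually_later_moves : exists T', forall t, T' <= t -> k < rank (iss t).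
Proof.
have [T' never_k] := eventually_never off_target_decreases.
exists (maxn T T') => t; rewrite geq_max => /andP [le_Tt le_T't].
rewrite ltn_neqAle late_moves // andbT; apply: contraNneq (never_k t le_T't).
by move=> eq_k; rewrite -[iss t](permKV o); apply/eqP; congr (o _); apply: val_inj.
Qed.

End Stage.

Lemma eventually_moves_from m : exists T, forall t, T <= t -> m <= rank (iss t).
Proof.
elim: m => [|m [T late]]; first by exists 0.
have [lt_mp|le_pm] := ltnP m p; last first.
  by exists T => t le_Tt; have := late t le_Tt; have := ltn_ord ((o^-1)%g (iss t)); lia.
exact: (@eventually_later_moves (Ordinal lt_mp) T).
Qed.

End Dynamics.

Local Open Scope ring_scope.

Theorem theorem2 (R : realDomainType) (p n : nat)
  (pref : 'I_n -> rel (outcome p)) (o : {perm 'I_p})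
  (dhat : nat -> nat -> R) :
  (forall j, strict_ranking (pref j)) ->
  (forall j, O_legal o (pref j)) ->
  monotone_dhat dhat ->
  ~ exists (a : nat -> profile p n) (ag : nat -> 'I_n) (iss : nat -> 'I_p)
           (r : nat -> 'I_n -> 'I_p -> R),
      (forall t j i, 0 <= r t j i) /\
      (forall t, LDI_step dhat pref (a t) (ag t) (iss t) (r t (ag t)) (a t.+1)).
Proof.
move=> strict legal dhat_mono [a [ag [iss [r [r_ge0 step]]]]].
have [T late] := eventually_moves_from strict legal dhat_mono r_ge0 step p.
by have := late T (leqnn T); rewrite leqNgt ltn_ord.
Qed.
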